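(* Let $\Gamma$ be a rationally metrised graph and $\mu\in\mathcal M^0(\Gamma)$. For any fixed rational vertex $b$, the function $f(x)=\langle x-b,\mu\rangle$ on rational vertices $x$ is piecewise polynomial with log poles on the half-edges, and $\Delta(f)=\mu$.
   Context: Rationally metrised graph: finite sets of vertices $V$, oriented edges $E$, half-edges $D$, source map $s$, fixed-point-free involution $e\mapsto e^{-1}$ on $E$, $t(e)=s(e^{-1})$, connected, lengths $\ell(e)=\ell(e^{-1})\in\mathbb Q_{>0}$; $E^+$ = unoriented edges. Rational vertices are points at rational distance along edges or half-edges; all constructions are compatible with subdividing edges at rational points, so rational vertices may be treated as vertices (and a vertex $x$ as the delta measure at $x$). A measure (piecewise polynomial with log poles on $D$) is a formal sum $\mu=\sum_{e\in E}g_e(s_e)|ds_e|+\sum_{v\in V}\lambda_v v+\sum_{e\in D}\lambda_e e$ with $g_e\in\mathbb Q[s_e]$, $g_{e^{-1}}(s)=g_e(\ell(e)-s)$, $\lambda_v,\lambda_e\in\mathbb Q$; $\mathcal M^0(\Gamma)$ consists of those with $\sum_{e\in E^+}\int_0^{\ell(e)}g_e+\sum_v\lambda_v+\sum_{e\in D}\lambda_e=0$. $\Omega_{\log}(\Gamma)$ is the space of functions $f$ on rational vertices whose restriction $f_e$ to each edge is a polynomial in arc length and to each half-edge an affine function. The Laplacian $\Delta\colon\Omega_{\log}\to\mathcal M(\Gamma)$ is $\Delta f=-\sum_{e\in E}f_e''|ds_e|-\sum_v\left(\sum_{s(e)=v}f_e'(0)\right)v+\sum_{e\in D}f'_e\,e$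 (sum over edges and half-edges with source $v$). $\Delta$ has kernel the constants and image $\mathcal M^0(\Gamma)$. Integration: $\int f\,d\mu=\sum_{e\in E^+}\int_0^{\ell(e)}f_eg_e\,ds_e+\sum_v\lambda_vf(v)+\sum_{e\in D}\lambda_ef(s(e))$. Height pairing on $\mathcal M^0$: $\langle\mu,\nu\rangle=\int\Delta^{-1}(\mu)\,d\nu$ for any preimage $\Delta^{-1}(\mu)$ (independent of choice; symmetric). *)

From HB Require Import structures.
From mathcomp Require Import all_boot all_order all_algebra.
From Stdlib Require Import ClassicalEpsilon.

Set Implicit Arguments.
Unset Strict Implicit.
Unset Printing Implicit Defensive.

Import Order.TTheory GRing.Theory Num.Theory.
Local Open Scope ring_scope.

(* Raw data of a rationally metrised graph: vertices V, oriented edges E,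
   half-edges D, source maps, edge inversion, edge lengths.            *)
Record rmgraph := RGraph {
  gV : finType; gE : finType; gD : finType;
  src : gE -> gV;
  inv : gE -> gE;
  srcD : gD -> gV;
  len : gE -> rat }.

Definition tgt (G : rmgraph) (e : gE G) : gV G := src (inv e).

Definition adjacent (G : rmgraph) : rel (gV G) :=
  fun u v => [exists e : gE G, (src e == u) && (tgt e == v)].

Definition is_rmg (G : rmgraph) : Prop :=
  [/\ (forall e : gE G, inv (inv e) = e),
      (forall e : gE G, inv e != e),
      (forall e : gE G, 0 < len e),
      (forall e : gE G, len (inv e) = len e) &
      (forall u v, connect (@adjacent G) u v)].

(* unoriented edges E^+ : one chosen orientation of each pair {e, e^{-1}} *)
Definition Eplus (G : rmgraph) : pred (gE G) :=
  fun e => (enum_rank e < enum_rank (inv e))%N.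
Arguments Eplus : clear implicits.

(* Rational vertices: a vertex, a point at distance t along an edge e
   (0 < t < len e), or a point at distance t along a half-edge (0 < t).
   (PE e t) and (PE (inv e) (len e - t)) denote the same point.         *)
Inductive pt (G : rmgraph) : Type :=
  | PV of gV G
  | PE of gE G & rat
  | PD of gD G & rat.
Arguments PV {G}. Arguments PE {G}. Arguments PD {G}.

Definition valid_pt (G : rmgraph) (x : pt G) : Prop :=
  match x with
  | PV _ => True
  | PE e t => 0 < t < len e
  | PD _ t => 0 < t
  end.

(* Measures (piecewise polynomial with log poles on D):
   sum_e g_e |ds_e| + sum_v lambda_v v + sum_{e in D} lambda_e e.       *)
Record meas (G : rmgraph) := Meas {
  dens : gE G -> {poly rat};
  mV : gV G -> rat;
  mD : gD G -> rat }.
Arguments Meas {G}.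

(* antiderivative vanishing at 0, so that int_0^l p = (prim p).[l] *)
Definition prim (p : {poly rat}) : {poly rat} :=
  \poly_(i < (size p).+1) (if i is j.+1 then p`_j / j.+1%:R else 0).

Definition is_meas (G : rmgraph) (mu : meas G) : Prop :=
  forall e : gE G, dens mu (inv e) = dens mu e \Po ((len e)%:P - 'X).

Definition total_mass (G : rmgraph) (mu : meas G) : rat :=
  \sum_(e in Eplus G) (prim (dens mu e)).[len e]
  + \sum_(v : gV G) mV mu v + \sum_(d : gD G) mD mu d.

Definition in_M0 (G : rmgraph) (mu : meas G) : Prop :=
  is_meas mu /\ total_mass mu = 0.

(* Omega_log: f on rational vertices (respecting the identification
   PE e t = PE (inv e) (len e - t)) whose restriction to each (closed)
   edge e is the polynomial P e in arc length s_e, and whose restriction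
   to each half-edge d (with its source) is the affine polynomial Q d.  *)
Definition repr (G : rmgraph) (f : pt G -> rat)
    (P : gE G -> {poly rat}) (Q : gD G -> {poly rat}) : Prop :=
  [/\ (forall e t, 0 < t < len e -> f (PE (inv e) (len e - t)) = f (PE e t)),
      (forall e t, 0 < t < len e -> f (PE e t) = (P e).[t]),
      (forall e, f (PV (src e)) = (P e).[0]),
      (forall d, (size (Q d) <= 2)%N) &
      (forall d, f (PV (srcD d)) = (Q d).[0] /\
                 forall t, 0 < t -> f (PD d t) = (Q d).[t])].

Definition in_Omega_log (G : rmgraph) (f : pt G -> rat) : Prop :=
  exists P Q, repr f P Q.

Definition lap_is (G : rmgraph) (P : gE G -> {poly rat}) (Q : gD G -> {poly rat})
    (mu : meas G) : Prop :=
  [/\ (forall e, dens mu e = - (P e)^`(2)),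
      (forall v, mV mu v = - (\sum_(e : gE G | src e == v) (P e)^`().[0]
                              + \sum_(d : gD G | srcD d == v) (Q d)^`().[0])) &
      (forall d, mD mu d = (Q d)^`().[0])].

(* Delta f = mu (the polynomial pieces of f are uniquely determined by f) *)
Definition laplacian_eq (G : rmgraph) (f : pt G -> rat) (mu : meas G) : Prop :=
  exists P Q, repr f P Q /\ lap_is P Q mu.

Definition integ (G : rmgraph) (f : pt G -> rat) (P : gE G -> {poly rat})
    (mu : meas G) : rat :=
  \sum_(e in Eplus G) (prim (P e * dens mu e)).[len e]
  + \sum_(v : gV G) mV mu v * f (PV v)
  + \sum_(d : gD G) mD mu d * f (PV (srcD d)).

(* height pairing <m1, m2> = int Delta^{-1}(m1) dm2, for a (chosen) preimage *)
Definition pairing (G : rmgraph) (m1 m2 : meas G) : rat :=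
  epsilon (inhabits (0 : rat))
    (fun c => exists F P Q, repr F P Q /\ lap_is P Q m1 /\ c = integ F P m2).

Definition delta2 (G : rmgraph) (v w : gV G) : meas G :=
  Meas (fun _ => 0) (fun u => (u == v)%:R - (u == w)%:R) (fun _ => 0).

(* Subdivision of an edge e0 at distance t0 (from src e0).
   New vertex: None.  The edges e0, inv e0 are replaced by (o,h):
   o = true: oriented as e0, o = false: oriented as inv e0;
   h = true: the half starting at an old vertex, h = false: the half
   starting at the new vertex.                                        *)
Section SubdivEdge.
Variables (G : rmgraph) (e0 : gE G) (t0 : rat).

Definition oldE := {e : gE G | (e != e0) && (e != inv e0)}.

Definition sE_src (s : (oldE + (bool * bool))%type) : option (gV G) :=
  match s with
  | inl e => Some (src (val e))
  | inr (true, true) => Some (src e0)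
  | inr (false, true) => Some (src (inv e0))
  | inr (_, false) => None
  end.

Definition sE_inv (s : (oldE + (bool * bool))%type) : (oldE + (bool * bool))%type :=
  match s with
  | inl e => match (insub (inv (val e)) : option oldE) with
             | Some e' => inl e'
             | None => inr (true, true)
             end
  | inr (o, h) => inr (~~ o, ~~ h)
  end.

Definition sE_len (s : (oldE + (bool * bool))%type) : rat :=
  match s with
  | inl e => len (val e)
  | inr (o, h) => if o == h then t0 else len e0 - t0
  end.

Definition subdivE : rmgraph :=
  @RGraph (option (gV G)) (oldE + (bool * bool))%type (gD G)
    sE_src sE_inv (fun d => Some (srcD d)) sE_len.

Definition embE (x : pt G) : pt subdivE :=
  match x with
  | PV v => @PV subdivE (Some v)
  | PE e t =>
      if e == e0 then
        (if t < t0 then @PE subdivE (inr (true, true)) t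
         else if t == t0 then @PV subdivE None
         else @PE subdivE (inr (true, false)) (t - t0))
      else if e == inv e0 then
        (let t1 := len e0 - t0 in
         if t < t1 then @PE subdivE (inr (false, true)) t
         else if t == t1 then @PV subdivE None
         else @PE subdivE (inr (false, false)) (t - t1))
      else match (insub e : option oldE) with
           | Some e' => @PE subdivE (inl e') t
           | None => @PV subdivE None
           end
  | PD d t => @PD subdivE d t
  end.

Definition pullE (m : meas G) : meas subdivE :=
  @Meas subdivE
    (fun s => match s with
              | inl e => dens m (val e)
              | inr (true, true) => dens m e0
              | inr (true, false) => dens m e0 \Po ('X + t0%:P)
              | inr (false, true) => dens m (inv e0)
              | inr (false, false) => dens m (inv e0) \Po ('X + (len e0 - t0)%:P)
              end)
    (fun v => if v is Some v' then mV m v' else 0)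
    (mD m).
End SubdivEdge.

(* Subdivision of a half-edge d0 at distance t0: a new vertex None, a new
   edge pair inr true (src d0 -> new), inr false (new -> src d0) of
   length t0, and d0 now starts at the new vertex.                      *)
Section SubdivHalfEdge.
Variables (G : rmgraph) (d0 : gD G) (t0 : rat).

Definition sD_src (s : (gE G + bool)%type) : option (gV G) :=
  match s with
  | inl e => Some (src e)
  | inr true => Some (srcD d0)
  | inr false => None
  end.

Definition sD_inv (s : (gE G + bool)%type) : (gE G + bool)%type :=
  match s with inl e => inl (inv e) | inr b => inr (~~ b) end.

Definition sD_len (s : (gE G + bool)%type) : rat :=
  match s with inl e => len e | inr _ => t0 end.

Definition subdivD : rmgraph :=
  @RGraph (option (gV G)) (gE G + bool)%type (gD G)
    sD_src sD_inv (fun d => if d == d0 then None else Some (srcD d)) sD_len.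

Definition embD (x : pt G) : pt subdivD :=
  match x with
  | PV v => @PV subdivD (Some v)
  | PE e t => @PE subdivD (inl e) t
  | PD d t =>
      if d == d0 then
        (if t < t0 then @PE subdivD (inr true) t
         else if t == t0 then @PV subdivD None
         else @PD subdivD d0 (t - t0))
      else @PD subdivD d t
  end.

Definition pullD (m : meas G) : meas subdivD :=
  @Meas subdivD
    (fun s => match s with inl e => dens m e | inr _ => 0 end)
    (fun v => if v is Some v' then mV m v' else 0)
    (mD m).
End SubdivHalfEdge.

Definition subdiv (G : rmgraph) (p : pt G) : rmgraph :=
  match p with
  | PV _ => G
  | PE e t => subdivE e t
  | PD d t => subdivD d t
  end.

Definition emb (G : rmgraph) (p : pt G) : pt G -> pt (subdiv p) :=
  match p as q return pt G -> pt (subdiv q) with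
  | PV _ => id
  | PE e t => @embE G e t
  | PD d t => @embD G d t
  end.

Definition vemb (G : rmgraph) (p : pt G) : gV G -> gV (subdiv p) :=
  match p as q return gV G -> gV (subdiv q) with
  | PV _ => id
  | PE _ _ => fun v => Some v
  | PD _ _ => fun v => Some v
  end.

Definition newv (G : rmgraph) (p : pt G) : gV (subdiv p) :=
  match p as q return gV (subdiv q) with
  | PV v => v
  | PE _ _ => None
  | PD _ _ => None
  end.

Definition pull (G : rmgraph) (p : pt G) : meas G -> meas (subdiv p) :=
  match p as q return meas G -> meas (subdiv q) with
  | PV _ => id
  | PE e t => @pullE G e t
  | PD d t => @pullD G d t
  end.

(* f(x) = < x - b, mu >, computed on Gamma subdivided at x and at b *)
Definition hp_fun (G : rmgraph) (mu : meas G) (b : pt G) (x : pt G) : rat :=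
  let G1 := subdiv x in
  let b1 := emb x b in
  let G2 := subdiv b1 in
  pairing (delta2 (vemb b1 (newv x)) (newv b1)) (pull b1 (pull x mu)).

(* The Laplacian is inverted explicitly.  Given mu in M^0, take on each edge a
   second antiderivative of -mu corrected by an affine function, and on each
   half-edge the affine function whose slope is the point mass of mu there.
   The vertex conditions then become a discrete Laplace equation L a = beta for
   the vertex values; it is solvable because sum beta is minus the total mass
   of mu, which is 0, while ker L consists of the constants since the graph is
   connected.  This gives g in Omega_log with Delta g = mu.  Green's identity
   writes int F d(Delta G) as the Dirichlet form int F' G', which is symmetric;
   so, after subdividing at x and b (which carries g along),
   <x - b, mu> = int Delta^-1 (x - b) dmu = int g d(x - b) = g(x) - g(b),
   that is f = g - g(b). *)

From mathcomp Require Import all_boot all_order all_algebra.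
From mathcomp Require Import ring lra zify.
From Stdlib Require Import ClassicalEpsilon.

Set Implicit Arguments.
Unset Strict Implicit.
Unset Printing Implicit Defensive.

Import Order.TTheory GRing.Theory Num.Theory.
Local Open Scope ring_scope.

Section RealPoly.
Variable R : realFieldType.
Implicit Types (p q : {poly R}) (c l : R).

(* A nonzero difference would have the infinitely many roots l / (k + 2). *)
Lemma eq_poly_itv p q l :
  0 < l -> (forall t, 0 < t < l -> p.[t] = q.[t]) -> p = q.
Proof.
move=> l_gt0 eq_pq; apply/eqP; rewrite -subr_eq0; apply/negPn/negP => nz.
pose rs := [seq l / (k.+2)%:R | k <- iota 0 (size (p - q))].
have := max_poly_roots nz (rs := rs).
have -> : all (root (p - q)) rs.
  apply/allP => x /mapP [k _ ->]; rewrite /root hornerD hornerN eq_pq ?subrr //.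
  have k_gt1 : 1 < (k.+2)%:R :> R by rewrite ltr1n.
  rewrite divr_gt0 ?ltr0n //= ltr_pdivrMr ?ltr0n //; nra.
have -> : uniq rs.
  rewrite map_inj_uniq ?iota_uniq // => i j /= eq_ij.
  have : (i.+2)%:R^-1 = (j.+2)%:R^-1 :> R by apply: (mulfI (lt0r_neq0 l_gt0)).
  by move/invr_inj/eqP; rewrite eqr_nat => /eqP [].
by rewrite size_map size_iota ltnn => /(_ isT isT).
Qed.

Lemma eq_poly_horner p q : (forall x, p.[x] = q.[x]) -> p = q.
Proof. by move=> eq_pq; apply: (@eq_poly_itv _ _ 1) => // t _; apply: eq_pq. Qed.

Lemma deriv_eq0_polyC p : p^`() = 0 -> p = (p`_0)%:P.
Proof.
move=> dp0; apply/polyP => -[|i]; rewrite coefC //=.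
have /eqP := congr1 (fun r : {poly R} => r`_i) dp0.
by rewrite coef_deriv coef0 mulrn_eq0 /= => /eqP.
Qed.

End RealPoly.

Section CompPoly.
Variable R : comNzRingType.
Implicit Types (p q : {poly R}) (c : R).

Lemma comp_polyN p q : (- p) \Po q = - (p \Po q).
Proof. by rewrite -[- p]sub0r comp_polyB comp_poly0 sub0r. Qed.

Lemma comp_poly_CsubX_K p c : (p \Po (c%:P - 'X)) \Po (c%:P - 'X) = p.
Proof.
by rewrite -comp_polyA comp_polyB comp_polyC comp_polyX opprB addrC subrK comp_polyXr.
Qed.

Lemma deriv_comp_XaddC p c : (p \Po ('X + c%:P))^`() = p^`() \Po ('X + c%:P).
Proof. by rewrite deriv_comp derivD derivX derivC addr0 mulr1. Qed.

Lemma deriv_comp_CsubX p c : (p \Po (c%:P - 'X))^`() = - (p^`() \Po (c%:P - 'X)).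
Proof. by rewrite deriv_comp derivB derivX derivC sub0r mulrN1. Qed.

Lemma derivn2E p : p^`(2) = p^`()^`().
Proof. by []. Qed.

Lemma derivn2_comp_XaddC p c : (p \Po ('X + c%:P))^`(2) = p^`(2) \Po ('X + c%:P).
Proof. by rewrite !derivn2E !deriv_comp_XaddC. Qed.

Lemma derivn2_comp_CsubX p c : (p \Po (c%:P - 'X))^`(2) = p^`(2) \Po (c%:P - 'X).
Proof. by rewrite !derivn2E deriv_comp_CsubX derivN deriv_comp_CsubX opprK. Qed.

Lemma size_deriv_le1 p : (size p <= 2)%N -> (size p^`() <= 1)%N.
Proof.
have [->|nz] := eqVneq p 0; first by rewrite deriv0 size_poly0.
by have := lt_size_deriv nz; lia.
Qed.

Lemma derivn2_size2 p : (size p <= 2)%N -> p^`(2) = 0.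
Proof. by move/size_deriv_le1/size1_polyC; rewrite derivn2E => ->; rewrite derivC. Qed.

Lemma deriv_size2_const p c : (size p <= 2)%N -> p^`().[c] = p^`().[0].
Proof. by move/size_deriv_le1/size1_polyC => ->; rewrite !hornerC. Qed.

Definition affine c k : {poly R} := c%:P + k *: 'X.

Lemma size_affine c k : (size (affine c k) <= 2)%N.
Proof.
apply: leq_trans (size_polyD _ _) _; rewrite geq_max (leq_trans (size_polyC_leq1 _)) //=.
by apply: leq_trans (size_scale_leq _ _) _; rewrite size_polyX.
Qed.

Lemma horner_affine c k x : (affine c k).[x] = c + k * x.
Proof. by rewrite /affine !hornerE. Qed.

Lemma deriv_affine c k : (affine c k)^`() = k%:P.
Proof. by rewrite /affine derivD derivC derivZ derivX add0r alg_polyC. Qed.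

End CompPoly.

Lemma deriv_prim (p : {poly rat}) : (prim p)^`() = p.
Proof.
apply/polyP => i; rewrite coef_deriv /prim coef_poly ltnS.
case: ltnP => [_|le_size]; last by rewrite mul0rn nth_default.
by rewrite -(mulr_natr (p`_i / _)) divfK // pnatr_eq0.
Qed.

Lemma horner_prim0 (p : {poly rat}) : (prim p).[0] = 0.
Proof. by rewrite horner_coef0 /prim coef_poly. Qed.

Lemma horner_prim (p r : {poly rat}) (l : rat) :
  r^`() = p -> (prim p).[l] = r.[l] - r.[0].
Proof.
move=> dr; have /deriv_eq0_polyC/(congr1 (horner^~ l)) : (prim p - r)^`() = 0.
  by rewrite derivB deriv_prim dr subrr.
rewrite hornerC -horner_coef0 !hornerE horner_prim0 sub0r => /eqP.
by rewrite subr_eq => /eqP ->; rewrite addrC.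
Qed.

Lemma horner_prim_poly0 (l : rat) : (prim 0).[l] = 0.
Proof. by rewrite (@horner_prim _ 0) ?deriv0 // !horner0 subr0. Qed.

Lemma horner_prim_parts (p q : {poly rat}) (l : rat) :
  (prim (p * - q^`(2))).[l] =
  (prim (p^`() * q^`())).[l] - (p.[l] * q^`().[l] - p.[0] * q^`().[0]).
Proof.
rewrite (@horner_prim _ (prim (p^`() * q^`()) - p * q^`())); last first.
  by rewrite derivB derivM deriv_prim derivn2E mulrN; ring.
by rewrite !hornerE horner_prim0; ring.
Qed.

(** * Graphs and Green's identity *)

Lemma sum_fibers (A B : finType) (V : nmodType) (f : A -> B) (F : B -> A -> V) :
  \sum_(b : B) \sum_(a | f a == b) F b a = \sum_(a : A) F (f a) a.
Proof.
under eq_bigr do rewrite big_mkcond.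
rewrite exchange_big; apply: eq_bigr => a _.
rewrite (bigD1 (f a)) //= eqxx big1 ?addr0 // => b /negbTE.
by rewrite eq_sym => ->.
Qed.

Lemma sum_sig (V : nmodType) (T : finType) (p P : pred T) (F : T -> V) :
  \sum_(x : {e : T | p e} | P (val x)) F (val x) = \sum_(e | p e && P e) F e.
Proof.
rewrite (reindex_omap (val : {e : T | p e} -> T) insub); last first.
  by move=> i /andP [p_i _]; rewrite insubT.
by apply: eq_bigl => -[i p_i] /=; rewrite insubT ?p_i /= eqxx andbT.
Qed.

Lemma sum_bool_pair (V : nmodType) (F : bool * bool -> V) :
  \sum_(x : bool * bool) F x =
  F (true, true) + F (true, false) + F (false, true) + F (false, false).
Proof.
transitivity (\sum_(a : bool) \sum_(b : bool) F (a, b)).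
  by rewrite pair_big /=; apply: eq_big => [[a b]|[a b] _].
by rewrite !big_bool /= !addrA.
Qed.

Lemma sum_split2 (V : nmodType) (T : finType) (x y : T) (F : T -> V) : x != y ->
  \sum_(e : T) F e = F x + F y + \sum_(e | (e != x) && (e != y)) F e.
Proof.
move=> neq_xy; rewrite (bigD1 x) //= (bigD1 y) 1?eq_sym //= addrA.
by congr (_ + _); apply: eq_bigl => e; rewrite andbC.
Qed.

Lemma sum_indicator (R : pzSemiRingType) (T : finType) (u : T) (F : T -> R) :
  \sum_v (v == u)%:R * F v = F u.
Proof.
rewrite (bigD1 u) //= eqxx mul1r big1 ?addr0 // => v /negbTE ->.
by rewrite mul0r.
Qed.

Lemma connect_fun_eq (T : finType) (U : Type) (e : rel T) (f : T -> U) :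
  (forall x y, e x y -> f x = f y) -> forall x y, connect e x y -> f x = f y.
Proof.
move=> eq_f x y /connectP [p + ->]; elim: p x => //= z p IHp x /andP [e_xz p_z].
by rewrite (eq_f _ _ e_xz) IHp.
Qed.

Lemma connect_map (T T' : finType) (e : rel T) (e' : rel T') (f : T -> T') :
  (forall x y, e x y -> connect e' (f x) (f y)) ->
  forall x y, connect e x y -> connect e' (f x) (f y).
Proof.
move=> hf x y /connectP [p + ->]; elim: p x => //= z p IHp x /andP [e_xz p_z].
exact: connect_trans (hf _ _ e_xz) (IHp _ p_z).
Qed.

Lemma connect_from_root (T : finType) (e : rel T) (r : T) :
  connect_sym e -> (forall y, connect e r y) -> forall x y, connect e x y.
Proof. by move=> sym_e from_r x y; apply: connect_trans (from_r y); rewrite sym_e. Qed.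

Definition graph_axioms (H : rmgraph) : Prop :=
  [/\ involutive (@inv H), (forall e : gE H, inv e != e),
      (forall e : gE H, 0 < len e) & (forall e : gE H, len (inv e) = len e)].

Lemma is_rmg_axioms (H : rmgraph) : is_rmg H -> graph_axioms H.
Proof. by case. Qed.

Section GraphAxioms.
Variables (H : rmgraph) (ax : graph_axioms H).

Lemma invK : involutive (@inv H). Proof. by case: ax. Qed.
Lemma inv_neq (e : gE H) : inv e != e. Proof. by case: ax. Qed.
Lemma len_gt0 (e : gE H) : 0 < len e. Proof. by case: ax. Qed.
Lemma len_inv (e : gE H) : len (inv e) = len e. Proof. by case: ax. Qed.

Lemma tgt_inv (e : gE H) : tgt (inv e) = src e.
Proof. by rewrite /tgt invK. Qed.

Lemma Eplus_inv (e : gE H) : (inv e \in Eplus H) = (e \notin Eplus H).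
Proof.
rewrite !unfold_in /Eplus invK ltnNge leq_eqVlt.
suff -> : (enum_rank e == enum_rank (inv e) :> nat) = false by [].
apply/negbTE/negP => /eqP /val_inj /enum_rank_inj eq_e.
by move: (inv_neq e); rewrite -eq_e eqxx.
Qed.

Lemma sum_Eplus (V : nmodType) (F : gE H -> V) :
  \sum_(e : gE H) F e = \sum_(e in Eplus H) (F e + F (inv e)).
Proof.
rewrite big_split /= (bigID (mem (Eplus H))) /=; congr (_ + _).
rewrite (reindex_inj (can_inj invK)) /=.
by apply: eq_bigl => e; rewrite Eplus_inv negbK.
Qed.

Lemma adjacent_sym : symmetric (@adjacent H).
Proof.
move=> x y; apply/existsP/existsP => -[e /andP [/eqP src_e /eqP tgt_e]];
  by exists (inv e); rewrite tgt_inv -/(tgt e) src_e tgt_e !eqxx.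
Qed.

End GraphAxioms.

Lemma adjacentI (H : rmgraph) (e : gE H) : @adjacent H (src e) (tgt e).
Proof. by apply/existsP; exists e; rewrite !eqxx. Qed.

Definition piecewise (H : rmgraph) (a : gV H -> rat) (P : gE H -> {poly rat})
    (Q : gD H -> {poly rat}) (z : pt H) : rat :=
  match z with PV v => a v | PE e t => (P e).[t] | PD d t => (Q d).[t] end.

(* [a], [P], [Q]: vertex values, edge pieces and half-edge pieces of one function. *)
Definition coherent (H : rmgraph) (a : gV H -> rat) (P : gE H -> {poly rat})
    (Q : gD H -> {poly rat}) : Prop :=
  [/\ (forall e, P (inv e) = P e \Po ((len e)%:P - 'X)),
      (forall e, (P e).[0] = a (src e)),
      (forall d, (Q d).[0] = a (srcD d)) &
      (forall d, (size (Q d) <= 2)%N)].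

Section Representation.
Variables (H : rmgraph) (ax : graph_axioms H).
Implicit Types (F : pt H -> rat) (P : gE H -> {poly rat}) (Q : gD H -> {poly rat}).

Lemma repr_piecewise a P Q : coherent a P Q -> repr (piecewise a P Q) P Q.
Proof.
case=> P_inv P_src Q_src Q_size; split => //= e t _.
by rewrite P_inv horner_comp !hornerE; congr (_.[_]); ring.
Qed.

Lemma repr_inv F P Q : repr F P Q -> forall e, P (inv e) = P e \Po ((len e)%:P - 'X).
Proof.
case=> F_inv F_edge _ _ _ e; apply: (@eq_poly_itv _ _ _ (len e) (len_gt0 ax e)).
move=> t t_in; have t_in' : 0 < t < len (inv e) by rewrite len_inv.
have t'_in : 0 < len e - t < len e by case/andP: t_in => ? ?; apply/andP; split; lra.
rewrite horner_comp !hornerE -F_edge // -F_edge // -(F_inv (inv e)) // invK // len_inv //.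
Qed.

Lemma eq_repr F F' P Q :
  (forall x, valid_pt x -> F' x = F x) -> repr F P Q -> repr F' P Q.
Proof.
move=> eqF [F_inv F_edge F_src Q_size F_half]; split => // [e t t_in|e t t_in|e|d].
- have t'_in : 0 < len e - t < len (inv e).
    by rewrite len_inv //; case/andP: t_in => ? ?; apply/andP; split; lra.
  by rewrite !eqF // F_inv.
- by rewrite eqF // F_edge.
- by rewrite eqF // F_src.
- by have [F_src' F_ray] := F_half d; split => [|t t_gt0]; rewrite eqF ?F_ray.
Qed.

Lemma repr_subC F P Q c : repr F P Q ->
  repr (fun x => F x - c) (fun e => P e - c%:P) (fun d => Q d - c%:P).
Proof.
case=> F_inv F_edge F_src Q_size F_half; split => [e t t_in|e t t_in|e|d|d].
- by rewrite F_inv.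
- by rewrite F_edge // !hornerE.
- by rewrite F_src !hornerE.
- rewrite -polyCN; apply: leq_trans (size_polyD _ _) _.
  by rewrite geq_max Q_size (leq_trans (size_polyC_leq1 _)).
- by have [F_src' F_ray] := F_half d; split => [|t t_gt0]; rewrite ?F_src' ?F_ray // !hornerE.
Qed.

Lemma lap_is_subC P Q m c : lap_is P Q m ->
  lap_is (fun e => P e - c%:P) (fun d => Q d - c%:P) m.
Proof.
have dB (p : {poly rat}) : (p - c%:P)^`() = p^`() by rewrite derivB derivC subr0.
case=> lap_edge lap_vertex lap_half; split => [e|v|d].
- by rewrite lap_edge !derivn2E dB.
- by rewrite lap_vertex; congr (- (_ + _)); apply: eq_bigr => x _; rewrite dB.
- by rewrite dB lap_half.
Qed.

End Representation.

Definition dirichlet (H : rmgraph) (P P' : gE H -> {poly rat}) : rat :=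
  \sum_(e in Eplus H) (prim ((P e)^`() * (P' e)^`())).[len e].

Lemma dirichletC (H : rmgraph) (P P' : gE H -> {poly rat}) :
  dirichlet P P' = dirichlet P' P.
Proof. by apply: eq_bigr => e _; rewrite mulrC. Qed.

Section Green.
Variables (H : rmgraph) (ax : graph_axioms H).
Implicit Types (F : pt H -> rat) (P : gE H -> {poly rat}) (Q : gD H -> {poly rat}).

Lemma sum_vertex_lap F P Q P' Q' m : repr F P Q -> lap_is P' Q' m ->
  \sum_v mV m v * F (PV v) + \sum_d mD m d * F (PV (srcD d)) =
  - \sum_e (P e).[0] * (P' e)^`().[0].
Proof.
case=> _ _ F_src _ _ [_ lap_vertex lap_half].
under eq_bigr do rewrite lap_vertex mulNr mulrDl !big_distrl.
rewrite sumrN big_split /= opprD -addrA.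
rewrite (sum_fibers (@srcD H) (fun v d => (Q' d)^`().[0] * F (PV v))).
under [X in _ + (_ + X)]eq_bigr do rewrite lap_half.
rewrite addNr addr0 (sum_fibers (@src H) (fun v e => (P' e)^`().[0] * F (PV v))).
by congr (- _); apply: eq_bigr => e _; rewrite F_src mulrC.
Qed.

Lemma integ_lap F P Q F' P' Q' m :
  repr F P Q -> repr F' P' Q' -> lap_is P' Q' m -> integ F P m = dirichlet P P'.
Proof.
move=> rF rF' lap; have P_inv := repr_inv ax rF; have P'_inv := repr_inv ax rF'.
rewrite /integ -addrA (sum_vertex_lap rF lap) (sum_Eplus ax) -sumrN -big_split /=.
apply: eq_bigr => e _; case: lap => lap_edge _ _.
rewrite lap_edge horner_prim_parts P_inv P'_inv deriv_comp_CsubX.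
by rewrite !hornerE !horner_comp !hornerE; ring.
Qed.

End Green.

(** * The discrete Laplacian *)

Definition dlap (H : rmgraph) (a : gV H -> rat) (v : gV H) : rat :=
  \sum_(e | src e == v) (a (tgt e) - a (src e)) / len e.

Section DiscreteLaplacian.
Variables (H : rmgraph) (ax : graph_axioms H).
Implicit Type a : gV H -> rat.

Lemma sum_dlap a : \sum_v dlap a v = 0.
Proof.
rewrite (sum_fibers (@src H) (fun _ e => (a (tgt e) - a (src e)) / len e)).
by rewrite (sum_Eplus ax) big1 // => e _; rewrite tgt_inv // /tgt len_inv //; ring.
Qed.

Lemma dlap_energy a :
  \sum_v a v * dlap a v = - \sum_(e in Eplus H) (a (tgt e) - a (src e)) ^+ 2 / len e.
Proof.
under eq_bigr do rewrite big_distrr.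
rewrite (sum_fibers (@src H) (fun v e => a v * ((a (tgt e) - a (src e)) / len e))).
rewrite (sum_Eplus ax) -sumrN; apply: eq_bigr => e _.
by rewrite tgt_inv // /tgt len_inv //; ring.
Qed.

(* The energy is a sum of nonnegative terms. *)
Lemma dlap_eq0_edge a : (forall v, dlap a v = 0) -> forall e, a (tgt e) = a (src e).
Proof.
move=> dlap0.
have energy0 : \sum_(e in Eplus H) (a (tgt e) - a (src e)) ^+ 2 / len e = 0.
  apply/eqP; rewrite -oppr_eq0 -dlap_energy; apply/eqP.
  by rewrite big1 // => v _; rewrite dlap0 mulr0.
have term_ge0 e : 0 <= (a (tgt e) - a (src e)) ^+ 2 / len e.
  by rewrite divr_ge0 ?sqr_ge0 ?ltW ?len_gt0.
have Eplus_eq e : e \in Eplus H -> a (tgt e) = a (src e).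
  move=> /(psumr_eq0P (fun e _ => term_ge0 e) energy0) /eqP.
  by rewrite mulf_eq0 invr_eq0 (negbTE (lt0r_neq0 (len_gt0 ax e))) orbF sqrf_eq0 subr_eq0 => /eqP.
move=> e; have [/Eplus_eq //|] := boolP (e \in Eplus H).
by rewrite -Eplus_inv // => /Eplus_eq; rewrite tgt_inv // /tgt => ->.
Qed.

End DiscreteLaplacian.

Lemma dlap_eq0_const (H : rmgraph) (a : gV H -> rat) : is_rmg H ->
  (forall v, dlap a v = 0) -> forall u v, a u = a v.
Proof.
move=> hr /(dlap_eq0_edge (is_rmg_axioms hr)) eq_edge u v.
case: hr => _ _ _ _ /(_ u v); apply: connect_fun_eq => x y /existsP [e].
by case/andP => /eqP <- /eqP <-; rewrite eq_edge.
Qed.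

Lemma sum_enum_val (V : nmodType) (T : finType) (F : T -> V) :
  \sum_(j < #|T|) F (enum_val j) = \sum_(v : T) F v.
Proof.
rewrite [RHS](reindex (@enum_val T predT)) //.
by apply: onW_bij; exists enum_rank; [exact: enum_valK | exact: enum_rankK].
Qed.

Lemma kermx_col_sub (F : fieldType) (n : nat) (A : 'M[F]_n) (c : 'cV[F]_n) :
  A *m c = 0 -> (kermx A <= c^T)%MS -> (kermx c <= A)%MS.
Proof.
move=> Ac0 kerA_sub; have A_sub : (A <= kermx c)%MS by apply/sub_kermxP.
rewrite -(mxrank_leqif_sup A_sub).2 eqn_leq (mxrankS A_sub) /= mxrank_ker.
have := mxrankS kerA_sub; rewrite mxrank_ker mxrank_tr.
by have := rank_leq_row A; lia.
Qed.

Definition dlap_mx (H : rmgraph) : 'M[rat]_#|gV H| :=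
  \matrix_(i, j) dlap (fun w => (enum_rank w == i)%:R) (enum_val j).

Lemma mul_dlap_mx (H : rmgraph) (u : 'rV[rat]_#|gV H|) j :
  (u *m dlap_mx H) 0 j = dlap (fun w => u 0 (enum_rank w)) (enum_val j).
Proof.
have pick_coord (k : 'I_#|gV H|) : \sum_i u 0 i * (k == i)%:R = u 0 k.
  by rewrite -[RHS]sum_indicator; apply: eq_bigr => i _; rewrite mulrC eq_sym.
rewrite !mxE; under eq_bigr do rewrite mxE /dlap big_distrr.
rewrite exchange_big /=; apply: eq_bigr => e _.
under eq_bigr do rewrite mulrA mulrBr.
by rewrite -big_distrl /= sumrB !pick_coord.
Qed.

(* By connectivity the kernel of [dlap] is the constants, so by rank-nullity its
   image is the hyperplane of functions with sum zero. *)
Lemma dlap_onto (H : rmgraph) (beta : gV H -> rat) : is_rmg H ->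
  \sum_v beta v = 0 -> exists a, forall v, dlap a v = beta v.
Proof.
move=> hr sum_beta; set A := dlap_mx H.
pose ones : 'cV[rat]_#|gV H| := const_mx 1.
have A_ones : A *m ones = 0.
  apply/matrixP => i k; rewrite !mxE; under eq_bigr do rewrite !mxE mulr1.
  by rewrite sum_enum_val (sum_dlap (is_rmg_axioms hr)).
have kerA_sub : (kermx A <= ones^T)%MS.
  apply/row_subP => i; set r := row i (kermx A).
  have rA0 : r *m A = 0 by rewrite /r -row_mul mulmx_ker row0.
  have r_const u v : r 0 (enum_rank u) = r 0 (enum_rank v).
    apply: (dlap_eq0_const (a := fun w => r 0 (enum_rank w))) hr _ u v => w.
    by rewrite -(enum_rankK w) -mul_dlap_mx rA0 mxE.
  clearbody r; apply/sub_rVP; exists (r 0 i); apply/rowP => j; rewrite !mxE mulr1.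
  by rewrite -(enum_valK j) -(enum_valK i) (r_const _ (enum_val i)).
have beta_sub : (\row_j beta (enum_val j) <= kermx ones)%MS.
  apply/sub_kermxP/matrixP => i k; rewrite !mxE.
  by under eq_bigr do rewrite !mxE mulr1; rewrite sum_enum_val.
have /submxP [D beta_eq] := submx_trans beta_sub (kermx_col_sub A_ones kerA_sub).
exists (fun w => D 0 (enum_rank w)) => v.
by rewrite -(enum_rankK v) -mul_dlap_mx -beta_eq mxE enum_rankK.
Qed.

(** * Solving Delta g = mu *)

Section LaplacianSolvable.
Variables (H : rmgraph) (hr : is_rmg H) (m : meas H) (hm : in_M0 m).

Let ax := is_rmg_axioms hr.

(* Particular solutions of f'' = - dens m on each edge, chosen on Eplus H and
   reflected onto the opposite orientation. *)
Let R0 (e : gE H) : {poly rat} := - prim (prim (dens m e)).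
Let R (e : gE H) : {poly rat} :=
  if e \in Eplus H then R0 e else R0 (inv e) \Po ((len e)%:P - 'X).

Let R_inv e : R (inv e) = R e \Po ((len e)%:P - 'X).
Proof.
rewrite /R Eplus_inv //; case: (boolP (e \in Eplus H)) => _ /=.
  by rewrite invK // len_inv.
by rewrite comp_poly_CsubX_K.
Qed.

Let R_deriv2 e : (R e)^`(2) = - dens m e.
Proof.
have R0_deriv2 e' : (R0 e')^`(2) = - dens m e'.
  by rewrite derivn2E !derivN !deriv_prim.
rewrite /R; case: (e \in Eplus H); rewrite ?derivn2_comp_CsubX R0_deriv2 //.
by case: hm => m_meas _; rewrite m_meas comp_polyN comp_poly_CsubX_K.
Qed.

(* Outgoing slope at [src e] of [R e] minus its linear interpolant. *)
Let flux (e : gE H) : rat := (R e)^`().[0] + ((R e).[0] - (R e).[len e]) / len e.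

Let flux_pair e : flux e + flux (inv e) = (prim (dens m e)).[len e].
Proof.
rewrite /flux (@horner_prim _ (- (R e)^`())); last first.
  by rewrite derivN -derivn2E R_deriv2 opprK.
rewrite R_inv deriv_comp_CsubX len_inv // !hornerE !horner_comp !hornerE subrr.
by simpl; ring.
Qed.

Let beta (v : gV H) : rat :=
  - mV m v - \sum_(d | srcD d == v) mD m d - \sum_(e | src e == v) flux e.

Let sum_beta : \sum_v beta v = 0.
Proof.
case: hm => _; rewrite /beta /total_mass !big_split /= !sumrN.
rewrite (sum_fibers (@srcD H) (fun _ d => mD m d)) (sum_fibers (@src H) (fun _ e => flux e)).
rewrite (sum_Eplus ax) (eq_bigr _ (fun e _ => flux_pair e)).
by move=> total0; rewrite -[RHS]oppr0 -[in RHS]total0; ring.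
Qed.

Lemma lap_solvable : exists a P Q, coherent a P Q /\ lap_is P Q m.
Proof.
have [a dlap_a] := dlap_onto hr sum_beta.
have len_neq0 e : len e != 0 := lt0r_neq0 (len_gt0 ax e).
pose k e := (a (tgt e) - a (src e) - (R e).[len e] + (R e).[0]) / len e.
(* The affine correction gives [P e] the end values [a (src e)] and [a (tgt e)]. *)
pose P e := R e + affine (a (src e) - (R e).[0]) (k e).
pose Q d := affine (a (srcD d)) (mD m d).
have P_slope e : (P e)^`().[0] = (a (tgt e) - a (src e)) / len e + flux e.
  by rewrite derivD deriv_affine hornerD hornerC /k /flux; ring.
exists a, P, Q; split; split.
- move=> e; apply: eq_poly_horner => x; rewrite /P /k R_inv /tgt invK // len_inv //.
  rewrite !(hornerD, horner_comp, horner_affine, hornerZ, hornerN, hornerC, hornerX, subr0) subrr.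
  by field.
- by move=> e; rewrite hornerD horner_affine mulr0 addr0 addrC subrK.
- by move=> d; rewrite horner_affine mulr0 addr0.
- by move=> d; exact: size_affine.
- by move=> e; rewrite derivnD (derivn2_size2 (size_affine _ _)) addr0 R_deriv2 opprK.
- move=> v; under eq_bigr do rewrite P_slope.
  under [X in _ + X]eq_bigr do rewrite deriv_affine hornerC.
  by rewrite big_split /= -/(dlap a v) dlap_a /beta; ring.
- by move=> d; rewrite deriv_affine hornerC.
Qed.

End LaplacianSolvable.

(** * Subdivision *)

Section SubdivEdgeFacts.
Variables (H : rmgraph) (hr : is_rmg H) (e0 : gE H) (t0 : rat).
Hypothesis t0_in : 0 < t0 < len e0.

Let ax := is_rmg_axioms hr.
Let G' := subdivE e0 t0.

Let oldE_inv (e : oldE e0) : (inv (val e) != e0) && (inv (val e) != inv e0).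
Proof.
have /andP [neq_e0 neq_inv_e0] := valP e.
apply/andP; split; apply/eqP => eq_inv.
  by move/eqP: neq_inv_e0; apply; rewrite -[val e](invK ax) eq_inv.
by move/eqP: neq_e0; apply; rewrite -[val e](invK ax) eq_inv invK.
Qed.

Let sE_inv_old (e : oldE e0) :
  sE_inv (inl e) = inl (Sub (inv (val e)) (oldE_inv e) : oldE e0).
Proof. by rewrite /sE_inv (@insubT _ _ (oldE e0) _ (oldE_inv e)). Qed.

Arguments sE_inv : simpl never.

Let subdivE_invK : involutive (@inv G').
Proof.
case=> [e|[o h]] /=; last by rewrite /sE_inv /= !negbK.
by rewrite !sE_inv_old; congr inl; apply: val_inj; rewrite /= invK.
Qed.

Lemma subdivE_axioms : graph_axioms G'.
Proof.
have [t0_gt0 t0_lt] := andP t0_in; split; first exact: subdivE_invK.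
- case=> [e|[[] []]] //=; rewrite sE_inv_old; apply/negP => /eqP [] /(congr1 val) /=.
  by apply/eqP; rewrite inv_neq.
- by case=> [e|[[] []]] //=; rewrite ?subr_gt0 ?len_gt0.
- by case=> [e|[[] []]] //=; rewrite sE_inv_old /= len_inv.
Qed.

Lemma is_rmg_subdivE : is_rmg G'.
Proof.
have [_ _ _ _ conn] := hr; split; try by case: subdivE_axioms.
have adj (s : gE G') x y : src s = x -> tgt s = y -> connect (@adjacent G') x y.
  by move=> <- <-; apply/connect1/adjacentI.
apply: (@connect_from_root _ _ (Some (src e0))).
  exact: sym_connect_sym (adjacent_sym subdivE_axioms).
case=> [v|]; last exact: (adj (inr (true, true))).
apply: (connect_map (f := Some)) (conn _ _) => x y /existsP [e /andP [/eqP <- /eqP <-]].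
have [->|neq_e0] := eqVneq e e0.
  apply: (connect_trans (y := None)); first exact: (adj (inr (true, true))).
  exact: (adj (inr (true, false))).
have [->|neq_inv_e0] := eqVneq e (inv e0).
  apply: (connect_trans (y := None)); first exact: (adj (inr (false, true))).
  by apply: (adj (inr (false, false))) => //=; rewrite /tgt invK.
have old_e : (e != e0) && (e != inv e0) by rewrite neq_e0 neq_inv_e0.
by apply: (adj (inl (Sub e old_e))); rewrite //= /tgt /= sE_inv_old.
Qed.

Lemma valid_embE y : valid_pt y -> valid_pt (embE e0 t0 y).
Proof.
case: y => [v|e t|d t] //= y_valid; have [t0_gt0 t0_lt] := andP t0_in.
have [eq_e0|neq_e0] := eqVneq e e0.
  subst e; case/andP: y_valid => ? ?.
  by case: ltgtP => //= cmp; apply/andP; split; lra.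
have [eq_inv|neq_inv_e0] := eqVneq e (inv e0).
  subst e; move: y_valid; rewrite len_inv // => /andP [? ?].
  by case: ltgtP => //= cmp; apply/andP; split; lra.
have old_e : (e != e0) && (e != inv e0) by rewrite neq_e0 neq_inv_e0.
by rewrite (@insubT _ _ (oldE e0) _ old_e).
Qed.

Section PiecesOnSubdivision.
Variables (a : gV H -> rat) (P : gE H -> {poly rat}) (Q : gD H -> {poly rat}).
Hypothesis coh : coherent a P Q.

Let a' (w : option (gV H)) : rat := if w is Some v then a v else (P e0).[t0].
Let P' (s : gE G') : {poly rat} :=
  match s with
  | inl e => P (val e)
  | inr (true, true) => P e0
  | inr (true, false) => P e0 \Po ('X + t0%:P)
  | inr (false, true) => P (inv e0)
  | inr (false, false) => P (inv e0) \Po ('X + (len e0 - t0)%:P)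
  end.

Lemma piecewise_embE (y : pt H) :
  valid_pt y -> @piecewise G' a' P' Q (embE e0 t0 y) = piecewise a P Q y.
Proof.
have [P_inv _ _ _] := coh.
case: y => [v|e t|d t] //= _.
have [eq_e0|neq_e0] := eqVneq e e0.
  subst e; case: ltgtP => [//|_|->] //=.
  by rewrite horner_comp !hornerE; congr (_.[_]); simpl; ring.
have [eq_inv|neq_inv_e0] := eqVneq e (inv e0).
  subst e; case: ltgtP => [//|_|->] /=.
    by rewrite horner_comp !hornerE; congr (_.[_]); simpl; ring.
  by rewrite P_inv horner_comp !hornerE; congr (_.[_]); simpl; ring.
have old_e : (e != e0) && (e != inv e0) by rewrite neq_e0 neq_inv_e0.
by rewrite (@insubT _ _ (oldE e0) _ old_e).
Qed.

Lemma coherent_subdivE : @coherent G' a' P' Q.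
Proof.
case: coh => P_inv P_src Q_src Q_size; split => //.
  case=> [e|[[] []]] /=; first by rewrite sE_inv_old /= P_inv.
  1-4: apply: eq_poly_horner => x; rewrite P_inv !horner_comp !hornerE.
  1-4: by congr (_.[_]); simpl; ring.
case=> [e|[[] []]] //=; rewrite ?P_inv !horner_comp !hornerE //.
by congr (_.[_]); simpl; ring.
Qed.

Lemma lap_is_subdivE m : lap_is P Q m -> @lap_is G' P' Q (pullE e0 t0 m).
Proof.
have [P_inv _ _ _] := coh.
case=> lap_edge lap_vertex lap_half; split => //.
- by case=> [e|[[] []]]; rewrite /= -derivn2E ?derivn2_comp_XaddC lap_edge ?comp_polyN.
- case=> [v|] /=.
  + rewrite lap_vertex; congr (- (_ + _)).
    rewrite big_sumType /=.
    rewrite (sum_sig (fun e => (e != e0) && (e != inv e0))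
      (fun e => Some (src e) == Some v) (fun e => (P e)^`().[0])).
    rewrite [X in _ + X]big_mkcond sum_bool_pair /= big_mkcondr /=.
    have ne0 : e0 != inv e0 by rewrite eq_sym inv_neq.
    rewrite big_mkcond (sum_split2 _ ne0) /= !(inj_eq (@Some_inj _)).
    by simpl; ring.
  + rewrite [X in _ + X]big_pred0 // addr0 big_sumType /= big_pred0 // add0r.
    rewrite big_mkcond sum_bool_pair /= !deriv_comp_XaddC P_inv deriv_comp_CsubX.
    rewrite !horner_comp !hornerE horner_comp !hornerE.
    rewrite (_ : len e0 - (len e0 - t0) = t0); first by rewrite subrr oppr0.
    by simpl; ring.
Qed.

End PiecesOnSubdivision.
End SubdivEdgeFacts.

Section SubdivHalfEdgeFacts.
Variables (H : rmgraph) (hr : is_rmg H) (d0 : gD H) (t0 : rat).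
Hypothesis t0_gt0 : 0 < t0.

Let ax := is_rmg_axioms hr.
Let G' := subdivD d0 t0.

Lemma subdivD_axioms : graph_axioms G'.
Proof.
split => [[e|b]|[e|[]]|[e|b]|[e|b]] //=; rewrite ?invK ?negbK ?len_gt0 ?len_inv //.
by apply/negP => /eqP [] /eqP; rewrite (negbTE (inv_neq ax _)).
Qed.

Lemma is_rmg_subdivD : is_rmg G'.
Proof.
have [_ _ _ _ conn] := hr; split; try by case: subdivD_axioms.
have adj (s : gE G') x y : src s = x -> tgt s = y -> connect (@adjacent G') x y.
  by move=> <- <-; apply/connect1/adjacentI.
apply: (@connect_from_root _ _ (Some (srcD d0))).
  exact: sym_connect_sym (adjacent_sym subdivD_axioms).
case=> [v|]; last exact: (adj (inr true)).
apply: (connect_map (f := Some)) (conn _ _) => x y /existsP [e /andP [/eqP <- /eqP <-]].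
exact: (adj (inl e)).
Qed.

Lemma valid_embD y : valid_pt y -> valid_pt (embD d0 t0 y).
Proof.
case: y => [v|e t|d t] //= y_valid.
have [eq_d0|//] := eqVneq d d0; subst d.
by case: ltgtP => //= cmp; rewrite ?y_valid ?subr_gt0.
Qed.

Section PiecesOnSubdivision.
Variables (a : gV H -> rat) (P : gE H -> {poly rat}) (Q : gD H -> {poly rat}).
Hypothesis coh : coherent a P Q.

Let a' (w : option (gV H)) : rat := if w is Some v then a v else (Q d0).[t0].
Let P' (s : gE G') : {poly rat} :=
  match s with
  | inl e => P e
  | inr true => Q d0
  | inr false => Q d0 \Po (t0%:P - 'X)
  end.
Let Q' (d : gD H) : {poly rat} := if d == d0 then Q d0 \Po ('X + t0%:P) else Q d.

Lemma piecewise_embD (y : pt H) :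
  valid_pt y -> @piecewise G' a' P' Q' (embD d0 t0 y) = piecewise a P Q y.
Proof.
case: y => [v|e t|d t] //= _.
have [eq_d0|neq_d0] := eqVneq d d0; last by rewrite /= /Q' (negbTE neq_d0).
subst d; case: ltgtP => [//|_|->] //=.
by rewrite /Q' eqxx horner_comp !hornerE; congr (_.[_]); simpl; ring.
Qed.

Lemma coherent_subdivD : @coherent G' a' P' Q'.
Proof.
case: coh => P_inv P_src Q_src Q_size; split.
- case=> [e|[]] //=.
  by apply: eq_poly_horner => x; rewrite !horner_comp !hornerE; congr (_.[_]); simpl; ring.
- case=> [e|[]] //=.
  by rewrite horner_comp !hornerE; congr (_.[_]); simpl; ring.
- move=> d; rewrite /Q'; have [eq_d0|neq_d0] := eqVneq d d0.
    by subst d; rewrite /= eqxx horner_comp !hornerE; congr (_.[_]); simpl; ring.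
  by rewrite /= (negbTE neq_d0) Q_src.
- move=> d; rewrite /Q'; case: (d == d0) => //.
  by rewrite size_comp_poly2 ?size_XaddC.
Qed.

Lemma lap_is_subdivD m : lap_is P Q m -> @lap_is G' P' Q' (pullD d0 t0 m).
Proof.
have [_ _ _ Q_size] := coh; have Q_deriv2 := derivn2_size2 (Q_size d0).
case=> lap_edge lap_vertex lap_half; split.
- by case=> [e|[]]; rewrite /= -derivn2E ?derivn2_comp_CsubX ?Q_deriv2 ?comp_poly0 ?oppr0.
- case=> [v|] /=.
  + rewrite lap_vertex; congr (- _).
    rewrite big_sumType /= [X in _ + X + _]big_mkcond big_bool /=.
    rewrite !(inj_eq (@Some_inj _)).
    have half_sum : \sum_(d | srcD d == v) (Q d)^`().[0] =
       (if srcD d0 == v then (Q d0)^`().[0] else 0) +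
       \sum_(d | d != d0) (if srcD d == v then (Q d)^`().[0] else 0).
      by rewrite big_mkcond (bigD1 d0).
    have half_sum' : \sum_(d | (if d == d0 then None else Some (srcD d)) == Some v) (Q' d)^`().[0]
       = \sum_(d | d != d0) (if srcD d == v then (Q d)^`().[0] else 0).
      rewrite big_mkcond (bigD1 d0) //= eqxx /= add0r; apply: eq_bigr => i ni.
      by rewrite /Q' (negbTE ni) (inj_eq (@Some_inj _)).
    have edge_sum : \sum_(e | src e == v) (P e)^`().[0] =
                    \sum_(e | Some (src e) == Some v) (P e)^`().[0].
      by apply: eq_bigl => e; rewrite (inj_eq (@Some_inj _)).
    by rewrite half_sum half_sum' edge_sum addr0 addrA.
  + rewrite big_sumType /= big_pred0 // add0r big_mkcond big_bool /=.
    rewrite (big_pred1 d0); last by move=> d; rewrite /= /pred1; case: (d == d0).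
    rewrite /Q' eqxx deriv_comp_XaddC deriv_comp_CsubX !horner_comp !hornerE.
    by rewrite horner_comp !hornerE addNr oppr0.
- move=> d /=; rewrite /Q'; have [eq_d0|neq_d0] := eqVneq d d0; last exact: lap_half.
  subst d; rewrite deriv_comp_XaddC horner_comp !hornerE.
  by rewrite (deriv_size2_const _ (Q_size d0)) lap_half.
Qed.

End PiecesOnSubdivision.
End SubdivHalfEdgeFacts.

Section Subdivision.
Variables (H : rmgraph) (hr : is_rmg H) (p : pt H).
Hypothesis p_valid : valid_pt p.

Lemma is_rmg_subdiv : is_rmg (subdiv p).
Proof.
by case: p p_valid => [v|e t|d t] /= ?; [| exact: is_rmg_subdivE | exact: is_rmg_subdivD].
Qed.

Lemma valid_emb y : valid_pt y -> valid_pt (emb p y).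
Proof. by case: p p_valid => [v|e t|d t] /= ?; [| exact: valid_embE | exact: valid_embD]. Qed.

Lemma subdiv_pieces m a P Q : coherent a P Q -> lap_is P Q m ->
  exists a' P' Q', [/\ @coherent (subdiv p) a' P' Q', lap_is P' Q' (pull p m),
    (forall y, valid_pt y -> piecewise a' P' Q' (emb p y) = piecewise a P Q y),
    (forall v, a' (vemb p v) = a v) & a' (newv p) = piecewise a P Q p].
Proof.
move=> coh lap; case: p p_valid => [v|e t|d t] /= p_valid'.
- by exists a, P, Q.
- eexists _, _, _; split; [exact (coherent_subdivE hr e t coh) |
    exact (lap_is_subdivE hr e t coh lap) | exact (piecewise_embE e t coh) | by [] | by []].
- eexists _, _, _; split; [exact (coherent_subdivD d t coh) |
    exact (lap_is_subdivD d t coh lap) | exact (piecewise_embD d t a P Q) | by [] | by []].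
Qed.

End Subdivision.

(** * The height pairing *)

Lemma in_M0_delta2 (H : rmgraph) (u w : gV H) : in_M0 (delta2 u w).
Proof.
split; first by move=> e; rewrite comp_poly0.
rewrite /total_mass /= big1 => [|e _]; last exact: horner_prim_poly0.
rewrite [X in _ + X]big1 // addr0 add0r sumrB.
have sum1 (x : gV H) : \sum_v (v == x)%:R = 1 :> rat.
  by rewrite (eq_bigr (fun v => (v == x)%:R * 1)) ?sum_indicator // => v _; rewrite mulr1.
by rewrite !sum1 subrr.
Qed.

Lemma integ_delta2 (H : rmgraph) (F : pt H -> rat) (P : gE H -> {poly rat}) (u w : gV H) :
  integ F P (delta2 u w) = F (PV u) - F (PV w).
Proof.
rewrite /integ /= big1 => [|e _]; last by rewrite mulr0 horner_prim_poly0.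
rewrite [X in _ + X]big1 => [|d _]; last exact: mul0r.
by rewrite add0r addr0; under eq_bigr do rewrite mulrBl; rewrite sumrB !sum_indicator.
Qed.

Lemma pairing_delta2 (H : rmgraph) (m : meas H) a P Q (u w : gV H) :
  is_rmg H -> coherent a P Q -> lap_is P Q m -> pairing (delta2 u w) m = a u - a w.
Proof.
move=> hr coh lap; have ax := is_rmg_axioms hr; have rep := repr_piecewise coh.
have [ad [Pd [Qd [coh_d lap_d]]]] := lap_solvable hr (in_M0_delta2 u w).
have : exists c, exists F Pd Qd,
    repr F Pd Qd /\ lap_is Pd Qd (delta2 u w) /\ c = integ F Pd m.
  by exists (integ (piecewise ad Pd Qd) Pd m), (piecewise ad Pd Qd), Pd, Qd;
    split; first exact: repr_piecewise.
rewrite /pairing => /(epsilon_spec (inhabits (0 : rat))) [F [P0 [Q0 [rep0 [lap0 ->]]]]].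
rewrite (integ_lap ax rep0 rep lap) dirichletC -(integ_lap ax rep rep0 lap0).
by rewrite integ_delta2.
Qed.

Lemma hp_fun_eq (G : rmgraph) (mu : meas G) a P Q (b x : pt G) :
  is_rmg G -> coherent a P Q -> lap_is P Q mu -> valid_pt b -> valid_pt x ->
  hp_fun mu b x = piecewise a P Q x - piecewise a P Q b.
Proof.
move=> hr coh lap b_valid x_valid.
have [a1 [P1 [Q1 [coh1 lap1 emb1 _ new1]]]] := subdiv_pieces hr x_valid coh lap.
have hr1 := is_rmg_subdiv hr x_valid; have b1_valid := valid_emb hr x_valid b_valid.
have [a2 [P2 [Q2 [coh2 lap2 _ vemb2 new2]]]] := subdiv_pieces hr1 b1_valid coh1 lap1.
rewrite /hp_fun (pairing_delta2 _ _ (is_rmg_subdiv hr1 b1_valid) coh2 lap2).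
by rewrite vemb2 new1 new2 emb1.
Qed.

Theorem lemma7p10 (G : rmgraph) (mu : meas G) (b : pt G) :
  is_rmg G -> in_M0 mu -> valid_pt b ->
  in_Omega_log (hp_fun mu b) /\ laplacian_eq (hp_fun mu b) mu.
Proof.
move=> hr hm b_valid.
have [a [P [Q [coh lap]]]] := lap_solvable hr hm.
pose c := piecewise a P Q b.
have rep : repr (hp_fun mu b) (fun e => P e - c%:P) (fun d => Q d - c%:P).
  apply: (eq_repr (is_rmg_axioms hr) (F := fun x => piecewise a P Q x - c)).
    by move=> x x_valid; exact: hp_fun_eq.
  exact/repr_subC/repr_piecewise.
split; first by exists (fun e => P e - c%:P), (fun d => Q d - c%:P).
by exists (fun e => P e - c%:P), (fun d => Q d - c%:P); split; last exact: lap_is_subC.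
Qed.
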